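(* Let $q>0$ and $c=\sqrt q$. The solution of the Volterra lattice $u'_j=u_j(u_{j+1}-u_{j-1})$, $j\in\mathbb Z$, with initial data at $t=0$ given by $u_j=0$ for $j\le0$, $u_1=u_3=u_5=\dots=1$, $u_2=u_4=\dots=q$, has first component $u_1=f'_1/f_1$ with $$f_1=1+\int_0^t{}_1F_1\bigl(\tfrac32,3,4cx\bigr)e^{(c-1)^2x}\,dx.$$
   Context: $f'=df/dt$. ${}_1F_1(a,b,z)=\sum_{n\ge0}\frac{(a)_n}{(b)_n}\frac{z^n}{n!}$ with $(a)_n=a(a+1)\cdots(a+n-1)$, $(a)_0=1$. *)

From Stdlib Require Import Reals ZArith.
From Coquelicot Require Import Coquelicot.
Open Scope R_scope.

Fixpoint pochhammer (a : R) (n : nat) : R :=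
  match n with
  | O => 1
  | S m => pochhammer a m * (a + INR m)
  end.

Definition hyp1F1 (a b z : R) : R :=
  Series (fun n => pochhammer a n / pochhammer b n * z ^ n / INR (fact n)).

Definition f1 (q t : R) : R :=
  let c := sqrt q in
  1 + RInt (fun x => hyp1F1 (3/2) 3 (4 * c * x) * exp ((c - 1) ^ 2 * x)) 0 t.

(* On the half lattice u_1, u_2, ... (u_0 = 0 by uniqueness for the linear equation it
   satisfies) the moments m_k = [dyck u (2k) 0] obey m_k' = m_(k+1) - u_1 m_k. With
   b_k(t) = sum_n m_(n+k)(0) t^n / n!, so that b_k' = b_(k+1), the defects
   g_k = b_0 m_k - b_k vanish at t = 0 and solve g_k' = g_(k+1) - g_1 m_k; since they grow
   at most geometrically in k, iterating this bound gives |g_k(t)| <= C rho^k (K t)^n / n!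
   for every n, so g_1 = 0, i.e. u_1 = b_0' / b_0.
   For the data 1, q, 1, q, ... the moments m_(k+1)(0) are binomial transforms in
   (c - 1)^2 of c^i times Catalan numbers, and a Cauchy product identifies b_1(x) with
   1F1(3/2, 3, 4 c x) e^((c-1)^2 x); hence b_0 = f_1. *)

From Stdlib Require Import Reals ZArith Lra Lia.
From Coquelicot Require Import Coquelicot.
Open Scope R_scope.

Lemma INR_fact_pos n : 0 < INR (fact n).
Proof. apply lt_0_INR, lt_O_fact. Qed.

Lemma filterlim_Rplus {T} {F : (T -> Prop) -> Prop} {FF : Filter F} (f g : T -> R) (a b : R) :
  filterlim f F (locally a) -> filterlim g F (locally b) ->
  filterlim (fun x => f x + g x) F (locally (a + b)).
Proof. intros Hf Hg. exact (filterlim_comp_2 f g Rplus Hf Hg (filterlim_plus a b)). Qed.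

Lemma filterlim_Rmult {T} {F : (T -> Prop) -> Prop} {FF : Filter F} (f g : T -> R) (a b : R) :
  filterlim f F (locally a) -> filterlim g F (locally b) ->
  filterlim (fun x => f x * g x) F (locally (a * b)).
Proof. intros Hf Hg. exact (filterlim_comp_2 f g Rmult Hf Hg (filterlim_mult a b)). Qed.

Lemma is_derive_value (f : R -> R) (x l l' : R) : is_derive f x l -> l = l' -> is_derive f x l'.
Proof. now intros H <-. Qed.

Lemma is_derive_Rplus (f g : R -> R) (x df dg : R) :
  is_derive f x df -> is_derive g x dg -> is_derive (fun t => f t + g t) x (df + dg).
Proof. intros Hf Hg. exact (is_derive_plus f g x df dg Hf Hg). Qed.

Lemma is_derive_Rmult (f g : R -> R) (x df dg : R) :
  is_derive f x df -> is_derive g x dg -> is_derive (fun t => f t * g t) x (df * g x + f x * dg).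
Proof. intros Hf Hg. apply (is_derive_mult f g); [exact Hf|exact Hg|exact Rmult_comm]. Qed.

Lemma continuous_at_right (f : R -> R) (x : R) :
  continuous f x -> filterlim f (at_right x) (locally (f x)).
Proof.
  intros Hf. eapply filterlim_comp; [|exact Hf].
  intros P [d Hd]. exists d. intros y Hy _. apply Hd, Hy.
Qed.

Lemma le_at_0_of_derive_nonneg (F F' : R -> R) (t : R) :
  (forall s, 0 < s <= t -> is_derive F s (F' s)) ->
  (forall s, 0 < s <= t -> 0 <= F' s) ->
  filterlim F (at_right 0) (locally (F 0)) ->
  0 < t -> F 0 <= F t.
Proof.
  intros HD HF' HF Ht.
  assert (Hmono : forall s, 0 < s < t -> F s <= F t).
  { intros s Hs.
    destruct (MVT_gen F s t F') as [c [Hc Hmvt]].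
    - intros x Hx. rewrite Rmin_left, Rmax_right in Hx by lra. apply HD; lra.
    - intros x Hx. rewrite Rmin_left, Rmax_right in Hx by lra.
      apply continuity_pt_filterlim, (ex_derive_continuous F).
      exists (F' x). apply HD; lra.
    - rewrite Rmin_left, Rmax_right in Hc by lra.
      assert (0 <= F' c) by (apply HF'; lra). nra. }
  apply (filterlim_le (F := at_right 0) F (fun _ => F t) (F 0) (F t));
    [|exact HF|apply filterlim_const].
  exists (mkposreal t Ht). intros y Hy Hy0. apply Hmono. split; [exact Hy0|].
  apply Rabs_lt_between' in Hy. unfold minus, plus, opp in Hy. simpl in Hy. lra.
Qed.

Lemma abs_le_of_derive_abs_le (g g' h h' : R -> R) (t : R) :
  g 0 = 0 -> h 0 = 0 ->
  filterlim g (at_right 0) (locally 0) ->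
  (forall s, 0 < s <= t -> is_derive g s (g' s)) ->
  (forall s, is_derive h s (h' s)) ->
  (forall s, 0 < s <= t -> Rabs (g' s) <= h' s) ->
  0 < t -> Rabs (g t) <= h t.
Proof.
  intros Hg0 Hh0 Hg Dg Dh Hle Ht.
  assert (Hh : filterlim h (at_right 0) (locally (h 0))).
  { apply continuous_at_right, (ex_derive_continuous h). exists (h' 0). apply Dh. }
  assert (Hmono : forall e, Rabs e = 1 -> h 0 + e * g 0 <= h t + e * g t).
  { intros e He.
    apply (le_at_0_of_derive_nonneg (fun s => h s + e * g s) (fun s => h' s + e * g' s));
      [| |apply filterlim_Rplus; [exact Hh|]|exact Ht].
    - intros s Hs. apply is_derive_Rplus; [apply Dh|].
      apply (is_derive_scal (fun s => g s)). apply Dg, Hs.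
    - intros s Hs. specialize (Hle s Hs).
      assert (Habs : Rabs (e * g' s) <= h' s) by (rewrite Rabs_mult, He, Rmult_1_l; exact Hle).
      apply Rabs_le_between in Habs. lra.
    - rewrite Hg0. apply filterlim_Rmult; [apply filterlim_const|exact Hg]. }
  assert (H1 := Hmono 1 Rabs_R1). assert (H2 := Hmono (-1) ltac:(rewrite Rabs_left; lra)).
  rewrite Hg0, Hh0 in H1, H2. apply Rabs_le. lra.
Qed.

Lemma eq0_of_abs_le_pow_div_fact (C x y : R) : 0 <= C ->
  (forall n, Rabs y <= C * (x ^ n / INR (fact n))) -> y = 0.
Proof.
  intros HC H.
  destruct (Req_dec y 0) as [e|ne]; [exact e|exfalso].
  assert (Hy : 0 < Rabs y) by (apply Rabs_pos_lt; exact ne).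
  destruct (cv_speed_pow_fact x (Rabs y / (C + 1))) as [N HN].
  { apply Rdiv_lt_0_compat; lra. }
  specialize (HN N (Nat.le_refl N)). unfold Rdist in HN. rewrite Rminus_0_r in HN.
  specialize (H N).
  assert (C * (x ^ N / INR (fact N)) <= C * Rabs (x ^ N / INR (fact N))).
  { apply Rmult_le_compat_l; [lra|apply Rle_abs]. }
  assert (C * Rabs (x ^ N / INR (fact N)) <= C * (Rabs y / (C + 1))).
  { apply Rmult_le_compat_l; lra. }
  assert (C * (Rabs y / (C + 1)) < Rabs y).
  { apply (Rmult_lt_reg_r (C+1)); [lra|]. field_simplify; lra. }
  lra.
Qed.

Lemma graded_system_eq0 (g g' : nat -> R -> R) (T A rho K : R) :
  0 <= A -> 0 < rho -> 0 <= K ->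
  (forall k, g k 0 = 0) ->
  (forall k, filterlim (g k) (at_right 0) (locally 0)) ->
  (forall k s, 0 < s <= T -> is_derive (g k) s (g' k s)) ->
  (forall k s, 0 <= s <= T -> Rabs (g k s) <= A * rho ^ k) ->
  (forall s E, 0 < s <= T -> 0 <= E -> (forall j, Rabs (g j s) <= E * rho ^ j) ->
     forall k, Rabs (g' k s) <= K * E * rho ^ k) ->
  forall k s, 0 <= s <= T -> g k s = 0.
Proof.
  intros HA Hrho HK Hg0 Hg Dg Hbound Hder.
  assert (Hiter : forall n k s, 0 <= s <= T ->
            Rabs (g k s) <= A * rho ^ k * ((K * s) ^ n / INR (fact n))).
  { induction n as [|n IH]; intros k t Ht.
    - rewrite pow_O, Rdiv_1_r, Rmult_1_r. apply Hbound, Ht.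
    - assert (Hrk : 0 < rho ^ k) by (apply pow_lt, Hrho).
      destruct (Req_dec t 0) as [->|Ht0].
      { rewrite Hg0, Rabs_R0, Rmult_0_r, pow_i, Rdiv_0_l, Rmult_0_r by lia. lra. }
      apply (abs_le_of_derive_abs_le (g k) (g' k)
               (fun s => A * rho ^ k * ((K * s) ^ S n / INR (fact (S n))))
               (fun s => K * (A * ((K * s) ^ n / INR (fact n))) * rho ^ k));
        [apply Hg0| |apply Hg| | | |lra].
      + rewrite Rmult_0_r, pow_i, Rdiv_0_l, Rmult_0_r by lia. reflexivity.
      + intros s Hs. apply Dg; lra.
      + intro s. auto_derive; [exact I|].
        change (match n with 0%nat => 1 | S _ => INR n + 1 end) with (INR (S n)).
        change (fact n + n * fact n)%nat with (fact (S n)).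
        rewrite fact_simpl, mult_INR, S_INR.
        assert (Hf := INR_fact_pos n).
        assert (0 <= INR n) by apply pos_INR.
        field. lra.
      + intros s Hs. apply Hder; [lra| |].
        * apply Rmult_le_pos; [exact HA|]. apply Rdiv_le_0_compat; [|apply INR_fact_pos].
          apply pow_le, Rmult_le_pos; lra.
        * intro j. eapply Rle_trans; [apply (IH j s); lra|]. right; ring. }
  intros k s Hs.
  apply (eq0_of_abs_le_pow_div_fact (A * rho ^ k) (K * s)).
  - apply Rmult_le_pos; [lra|apply pow_le; lra].
  - intro n. apply Hiter, Hs.
Qed.

Lemma is_series_exp (y : R) : is_series (fun n => y ^ n / INR (fact n)) (exp y).
Proof.
  eapply is_series_ext; [|exact (is_exp_Reals y)]. intro n. rewrite pow_n_pow. reflexivity.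
Qed.

Lemma ex_series_scal_exp (c y : R) : ex_series (fun n => c * (y ^ n / INR (fact n))).
Proof. exists (c * exp y). exact (is_series_scal_l c _ _ (is_series_exp y)). Qed.

Lemma CV_radius_gt_of_ex_series_abs (a : nat -> R) :
  (forall r, 0 <= r -> ex_series (fun n => Rabs (a n * r ^ n))) ->
  forall x, Rbar_lt (Rabs x) (CV_radius a).
Proof.
  intros H x. set (r := Rabs x + 1).
  assert (Hr : 0 <= r) by (unfold r; assert (0 <= Rabs x) by apply Rabs_pos; lra).
  assert (Hb : exists M, forall n, Rabs (a n * r ^ n) <= M).
  { destruct (filterlim_bounded (fun n => Rabs (a n * r ^ n))) as [M HM].
    { exists 0. exact (ex_series_lim_0 _ (H r Hr)). }
    exists M. intro n. rewrite <- Rabs_Rabsolu. exact (HM n). }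
  assert (Hle := proj1 (CV_radius_bounded a) r Hb).
  destruct (CV_radius a) as [v| |]; simpl in *; [unfold r in Hle; lra|exact I|exact Hle].
Qed.

Lemma Series_ge0 (a : nat -> R) : (forall n, 0 <= a n) -> ex_series a -> 0 <= Series a.
Proof.
  intros Ha Hex. rewrite <- (Rmult_0_l (Series a)), <- Series_scal_l.
  apply Series_le; [|exact Hex]. intro n. rewrite Rmult_0_l. split; [lra|apply Ha].
Qed.

(* The [k]-th derivative of the exponential generating function of [a]. *)
Definition egf_shift (a : nat -> R) (k : nat) : R -> R :=
  PSeries (fun n => a (n + k)%nat / INR (fact n)).

Section ShiftedEgf.

Variables (a : nat -> R) (r : R).
Hypothesis a_bound : forall m, Rabs (a m) <= r ^ m.

Lemma egf_term_abs_le k n x : 0 <= x ->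
  Rabs (a (n + k)%nat / INR (fact n) * x ^ n) <= r ^ k * ((r * x) ^ n / INR (fact n)).
Proof.
  intro Hx. assert (Hf := INR_fact_pos n).
  rewrite Rabs_mult, Rabs_div, (Rabs_pos_eq (INR _)), (Rabs_pos_eq (x ^ n))
    by (lra || apply pow_le, Hx).
  replace (r ^ k * ((r * x) ^ n / INR (fact n))) with (r ^ (n + k) / INR (fact n) * x ^ n)
    by (rewrite Rpow_mult_distr, pow_add; field; lra).
  apply Rmult_le_compat_r; [apply pow_le, Hx|].
  apply Rmult_le_compat_r; [left; apply Rinv_0_lt_compat, Hf|apply a_bound].
Qed.

Lemma egf_shift_radius k x : Rbar_lt (Rabs x) (CV_radius (fun n => a (n + k)%nat / INR (fact n))).
Proof.
  apply CV_radius_gt_of_ex_series_abs. intros y Hy.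
  apply (ex_series_le (V := R_CompleteNormedModule) _
           (fun n => r ^ k * ((r * y) ^ n / INR (fact n)))).
  - intro n. rewrite Rabs_Rabsolu. apply egf_term_abs_le, Hy.
  - apply ex_series_scal_exp.
Qed.

Lemma is_derive_egf_shift k s : is_derive (egf_shift a k) s (egf_shift a (S k) s).
Proof.
  unfold egf_shift.
  replace (PSeries _ s) with (PSeries (PS_derive (fun n => a (n + k)%nat / INR (fact n))) s).
  - apply is_derive_PSeries, egf_shift_radius.
  - apply PSeries_ext. intro n. unfold PS_derive.
    replace (S n + k)%nat with (n + S k)%nat by lia.
    rewrite fact_simpl, mult_INR.
    assert (Hf := INR_fact_pos n).
    assert (0 < INR (S n)) by (apply lt_0_INR; lia). field. lra.
Qed.

Lemma egf_shift_0 k : egf_shift a k 0 = a k.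
Proof. unfold egf_shift. rewrite PSeries_0. simpl. field. Qed.

Lemma continuous_egf_shift k s : continuous (egf_shift a k) s.
Proof.
  apply (ex_derive_continuous (egf_shift a k)). eexists. apply is_derive_egf_shift.
Qed.

Lemma egf_shift_abs_le k s : 0 <= s -> Rabs (egf_shift a k s) <= r ^ k * exp (r * s).
Proof.
  intro Hs. unfold egf_shift, PSeries.
  assert (Hex : ex_series (fun n => r ^ k * ((r * s) ^ n / INR (fact n)))).
  { apply ex_series_scal_exp. }
  assert (Hle : forall n, Rabs (a (n + k)%nat / INR (fact n) * s ^ n)
                          <= r ^ k * ((r * s) ^ n / INR (fact n))).
  { intro n. apply egf_term_abs_le, Hs. }
  assert (Habs : ex_series (fun n => Rabs (a (n + k)%nat / INR (fact n) * s ^ n))).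
  { refine (ex_series_le (V := R_CompleteNormedModule) _ _ _ Hex).
    intro n. apply Rle_trans with (2 := Hle n). right. apply Rabs_Rabsolu. }
  eapply Rle_trans; [exact (Series_Rabs _ Habs)|].
  rewrite <- (is_series_unique _ _ (is_series_exp (r * s))), <- Series_scal_l.
  apply Series_le; [|exact Hex]. intro n. split; [apply Rabs_pos|apply Hle].
Qed.

Lemma egf_shift_ge1 s : a 0%nat = 1 -> (forall m, 0 <= a m) -> 0 <= s -> 1 <= egf_shift a 0 s.
Proof.
  intros Ha0 Hpos Hs. unfold egf_shift, PSeries.
  assert (Hnn : forall n, 0 <= a (n + 0)%nat / INR (fact n) * s ^ n).
  { intro n. apply Rmult_le_pos; [|apply pow_le, Hs].
    apply Rdiv_le_0_compat; [apply Hpos|apply INR_fact_pos]. }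
  assert (Hex : ex_series (fun n => a (n + 0)%nat / INR (fact n) * s ^ n)).
  { apply ex_series_Rabs.
    refine (ex_series_le (V := R_CompleteNormedModule) _ _ _ (ex_series_scal_exp 1 (r * s))).
    intro n. change (norm _) with (Rabs (Rabs (a (n + 0)%nat / INR (fact n) * s ^ n))).
    rewrite Rabs_Rabsolu, <- (pow_O r). apply egf_term_abs_le, Hs. }
  rewrite Series_incr_1 by exact Hex.
  replace (a (0 + 0)%nat / INR (fact 0) * s ^ 0) with 1 by (simpl; rewrite Ha0; field).
  assert (0 <= Series (fun n => a (S n + 0)%nat / INR (fact (S n)) * s ^ S n)).
  { apply Series_ge0; [intro n; apply Hnn|]. now apply ex_series_incr_1 in Hex. }
  lra.
Qed.

End ShiftedEgf.

(* [dyck w n h] sums, over the paths of [n] steps +-1 from height [h] down to 0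
   that stay nonnegative, the product of [w j] over their down-steps from height [j].
   Its values [dyck w (2 * k) 0] are the moments of the Stieltjes continued fraction
   with coefficients [w 1, w 2, ...]. *)
Fixpoint dyck (w : nat -> R) (n h : nat) : R :=
  match n, h with
  | O, O => 1
  | O, S _ => 0
  | S n', O => dyck w n' 1
  | S n', S h' => dyck w n' (S (S h')) + w (S h') * dyck w n' h'
  end.

Lemma dyck_abs_le (w : nat -> R) (M : R) : 0 <= M -> (forall h, Rabs (w h) <= M) ->
  forall n h, Rabs (dyck w n h) <= (1 + M) ^ n.
Proof.
  intros HM Hw n; induction n as [|n IH]; intro h.
  - destruct h; simpl; rewrite ?Rabs_R1, ?Rabs_R0; lra.
  - assert (0 <= (1 + M) ^ n) by (apply pow_le; lra).
    destruct h as [|h]; simpl.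
    + specialize (IH 1%nat). nra.
    + eapply Rle_trans; [apply Rabs_triang|]. rewrite Rabs_mult.
      assert (Rabs (w (S h)) * Rabs (dyck w n h) <= M * (1 + M) ^ n).
      { apply Rmult_le_compat; auto using Rabs_pos. }
      specialize (IH (S (S h))). nra.
Qed.

Lemma dyck_ge0 (w : nat -> R) : (forall h, 0 <= w h) -> forall n h, 0 <= dyck w n h.
Proof.
  intros Hw n; induction n as [|n IH]; intro h.
  - destruct h; simpl; lra.
  - destruct h as [|h]; simpl; [apply IH|].
    specialize (Hw (S h)). assert (I1 := IH (S (S h))). assert (I2 := IH h). nra.
Qed.

Lemma filterlim_dyck {T} {F : (T -> Prop) -> Prop} {FF : Filter F}
  (w : nat -> T -> R) (w0 : nat -> R) :
  (forall h, filterlim (w h) F (locally (w0 h))) ->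
  forall n h, filterlim (fun x => dyck (fun j => w j x) n h) F (locally (dyck w0 n h)).
Proof.
  intros Hw n; induction n as [|n IH]; intro h.
  - destruct h; apply filterlim_const.
  - destruct h as [|h]; simpl; [apply IH|].
    apply filterlim_Rplus; [apply IH|]. apply filterlim_Rmult; [apply Hw|apply IH].
Qed.

Definition moment (w : nat -> R -> R) (k : nat) (t : R) : R := dyck (fun j => w j t) (2 * k) 0.

Section HalfLattice.

Variable w : nat -> R -> R.
Hypothesis w0_vanish : forall t, 0 < t -> w O t = 0.
Hypothesis w_volterra : forall h t, 0 < t ->
  is_derive (w (S h)) t (w (S h) t * (w (S (S h)) t - w h t)).

Lemma is_derive_dyck n h t : 0 < t ->
  is_derive (fun s => dyck (fun j => w j s) n h) t
    ((w h t + w (S h) t - w 1%nat t) * dyck (fun j => w j t) n h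
     + dyck (fun j => w j t) n (S (S h))).
Proof.
  intro Ht. revert h; induction n as [|n IH]; intros [|h]; simpl.
  - eapply is_derive_value; [apply is_derive_const|].
    rewrite w0_vanish by exact Ht. change zero with 0. ring.
  - eapply is_derive_value; [apply is_derive_const|]. change zero with 0. ring.
  - eapply is_derive_value; [apply IH|]. rewrite w0_vanish by exact Ht. ring.
  - eapply is_derive_value.
    + apply is_derive_Rplus; [apply IH|].
      apply is_derive_Rmult; [apply w_volterra, Ht|apply IH].
    + cbv beta. ring.
Qed.

Lemma is_derive_moment k t : 0 < t ->
  is_derive (moment w k) t (moment w (S k) t - w 1%nat t * moment w k t).
Proof.
  intro Ht. eapply is_derive_value; [apply is_derive_dyck, Ht|].
  unfold moment. replace (2 * S k)%nat with (S (S (2 * k))) by lia. cbn [dyck].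
  rewrite w0_vanish by exact Ht. ring.
Qed.

Lemma moment_1 t : moment w 1 t = w 1%nat t.
Proof. unfold moment. cbn [dyck Nat.mul Nat.add]. ring. Qed.

Hypothesis w_right_cont : forall h, filterlim (w h) (at_right 0) (locally (w h 0)).
Hypothesis w_bounded : forall T, 0 < T ->
  exists M, forall h t, 0 <= t <= T -> Rabs (w h t) <= M.

Lemma moment_abs_le T M : 0 <= T -> (forall h t, 0 <= t <= T -> Rabs (w h t) <= M) ->
  forall k t, 0 <= t <= T -> Rabs (moment w k t) <= ((1 + M) ^ 2) ^ k.
Proof.
  intros HT HM k t Ht.
  assert (0 <= M) by (apply Rle_trans with (2 := HM O 0 ltac:(lra)), Rabs_pos).
  rewrite <- pow_mult. apply dyck_abs_le; [lra|]. intro h. apply HM, Ht.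
Qed.

Let N k := moment w k 0.

Lemma initial_moment_bound : exists r, 0 <= r /\ forall m, Rabs (N m) <= r ^ m.
Proof.
  destruct (w_bounded 1 Rlt_0_1) as [M HM].
  assert (0 <= M) by (apply Rle_trans with (2 := HM O 0 ltac:(lra)), Rabs_pos).
  exists ((1 + M) ^ 2). split; [apply pow_le; lra|].
  intro m. apply (moment_abs_le 1 M); [lra|exact HM|lra].
Qed.

Let defect k x := egf_shift N 0 x * moment w k x - egf_shift N k x.

Lemma defect_at_0 k : defect k 0 = 0.
Proof. unfold defect. rewrite !egf_shift_0. unfold N, moment. simpl. ring. Qed.

Lemma defect_at_right k : filterlim (defect k) (at_right 0) (locally 0).
Proof.
  destruct initial_moment_bound as [r [_ Hr]].
  assert (Hegf : forall j, filterlim (egf_shift N j) (at_right 0) (locally (egf_shift N j 0))).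
  { intro j. apply continuous_at_right, (continuous_egf_shift _ r Hr). }
  assert (Hlim : filterlim (fun x => egf_shift N 0 x * moment w k x + (-1) * egf_shift N k x)
            (at_right 0) (locally (egf_shift N 0 0 * moment w k 0 + (-1) * egf_shift N k 0))).
  { apply filterlim_Rplus; apply filterlim_Rmult;
      [apply Hegf|apply (filterlim_dyck w (fun h => w h 0) w_right_cont)
      |apply filterlim_const|apply Hegf]. }
  replace (_ + _) with (defect k 0) in Hlim by (unfold defect; ring).
  rewrite defect_at_0 in Hlim.
  eapply filterlim_ext; [|exact Hlim]. intro x. unfold defect. ring.
Qed.

Lemma is_derive_defect k x : 0 < x ->
  is_derive (defect k) x (defect (S k) x - defect 1 x * moment w k x).
Proof.
  intro Hx. destruct initial_moment_bound as [r [_ Hr]].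
  eapply is_derive_value.
  - apply (is_derive_minus (fun x => egf_shift N 0 x * moment w k x) (egf_shift N k)).
    + apply is_derive_Rmult; [apply (is_derive_egf_shift _ r Hr)|apply is_derive_moment, Hx].
    + apply (is_derive_egf_shift _ r Hr).
  - unfold defect. rewrite moment_1. unfold minus, plus, opp; simpl. ring.
Qed.

Lemma defect_abs_le T M r k x : 0 <= r -> (forall m, Rabs (N m) <= r ^ m) ->
  (forall h t, 0 <= t <= T -> Rabs (w h t) <= M) -> 0 <= x <= T ->
  Rabs (defect k x) <= 2 * exp (r * T) * Rmax r ((1 + M) ^ 2) ^ k.
Proof.
  intros Hr0 Hr HM Hx. set (rho := Rmax r ((1 + M) ^ 2)).
  assert (HM0 : 0 <= M) by (apply Rle_trans with (2 := HM O 0 ltac:(lra)), Rabs_pos).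
  assert (Hmom : Rabs (moment w k x) <= rho ^ k).
  { apply Rle_trans with (1 := moment_abs_le T M ltac:(lra) HM k x Hx).
    apply pow_incr. split; [apply pow_le; lra|apply Rmax_r]. }
  assert (He : exp (r * x) <= exp (r * T)).
  { assert (Hrx : r * x <= r * T) by (apply Rmult_le_compat_l; lra).
    destruct Hrx as [Hlt|Heq]; [left; apply exp_increasing, Hlt|rewrite Heq; lra]. }
  assert (E0 := egf_shift_abs_le N r Hr 0 x ltac:(lra)). rewrite pow_O, Rmult_1_l in E0.
  assert (Ek := egf_shift_abs_le N r Hr k x ltac:(lra)).
  assert (Hrk : r ^ k <= rho ^ k) by (apply pow_incr; split; [exact Hr0|apply Rmax_l]).
  assert (0 < exp (r * x)) by apply exp_pos.
  assert (0 <= r ^ k) by (apply pow_le, Hr0).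
  assert (Rabs (egf_shift N 0 x) * Rabs (moment w k x) <= exp (r * T) * rho ^ k)
    by (apply Rmult_le_compat; auto using Rabs_pos; lra).
  assert (r ^ k * exp (r * x) <= rho ^ k * exp (r * T)) by (apply Rmult_le_compat; lra).
  unfold defect. eapply Rle_trans; [apply Rabs_triang|]. rewrite Rabs_Ropp, Rabs_mult. lra.
Qed.

Lemma defect_eq0 k s : 0 <= s -> defect k s = 0.
Proof.
  intro Hs. destruct initial_moment_bound as [r [Hr0 Hr]].
  set (T := s + 1). destruct (w_bounded T ltac:(unfold T; lra)) as [M HM].
  set (rho := Rmax r ((1 + M) ^ 2)).
  assert (HM0 : 0 <= M) by (apply Rle_trans with (2 := HM O 0 ltac:(unfold T; lra)), Rabs_pos).
  assert (Hrho : 0 < rho) by (apply Rlt_le_trans with (2 := Rmax_r _ _), pow_lt; lra).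
  apply (graded_system_eq0 defect (fun k x => defect (S k) x - defect 1 x * moment w k x)
           T (2 * exp (r * T)) rho (2 * rho));
    [| |lra|apply defect_at_0|apply defect_at_right| | | |unfold T; lra].
  - left. apply Rmult_lt_0_compat; [lra|apply exp_pos].
  - exact Hrho.
  - intros j x Hx. apply is_derive_defect, Hx.
  - intros j x Hx. apply (defect_abs_le T M r j x Hr0 Hr HM Hx).
  - intros x E Hx HE Hj j.
    assert (Hmom : Rabs (moment w j x) <= rho ^ j).
    { apply Rle_trans with (1 := moment_abs_le T M ltac:(unfold T; lra) HM j x ltac:(lra)).
      apply pow_incr. split; [apply pow_le; lra|apply Rmax_r]. }
    assert (Rabs (defect 1 x) * Rabs (moment w j x) <= E * rho ^ 1 * rho ^ j)
      by (apply Rmult_le_compat; auto using Rabs_pos).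
    specialize (Hj (S j)). eapply Rle_trans; [apply Rabs_triang|]. rewrite Rabs_Ropp, Rabs_mult.
    simpl pow in *. nra.
Qed.

Lemma egf_moment_mul_w1 s : 0 <= s -> egf_shift N 0 s * w 1%nat s = egf_shift N 1 s.
Proof.
  intro Hs. assert (H := defect_eq0 1 s Hs). unfold defect in H. rewrite moment_1 in H. lra.
Qed.

Hypothesis w_init_ge0 : forall h, 0 <= w h 0.

Theorem w1_eq_log_derive_egf s : 0 <= s -> w 1%nat s = Derive (egf_shift N 0) s / egf_shift N 0 s.
Proof.
  intro Hs. destruct initial_moment_bound as [r [_ Hr]].
  assert (Hpos : 1 <= egf_shift N 0 s).
  { apply (egf_shift_ge1 N r Hr s eq_refl); [intro m; apply dyck_ge0, w_init_ge0|exact Hs]. }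
  rewrite (is_derive_unique _ _ _ (is_derive_egf_shift N r Hr 0 s)).
  rewrite <- egf_moment_mul_w1 by exact Hs.
  field. lra.
Qed.

End HalfLattice.

(* Stdlib's [Binomial.C n k] is not 0 for [k > n]; [binomZ] is the binomial coefficient,
   extended by 0 outside [0 <= m <= n]. *)
Definition binomZ (n : nat) (m : Z) : R :=
  if andb (0 <=? m)%Z (m <=? Z.of_nat n)%Z then Binomial.C n (Z.to_nat m) else 0.

Lemma binomZ_S n m : binomZ (S n) m = binomZ n m + binomZ n (m - 1).
Proof.
  unfold binomZ.
  destruct (Z.leb_spec 0 m), (Z.leb_spec m (Z.of_nat (S n))),
    (Z.leb_spec 0 (m - 1)), (Z.leb_spec m (Z.of_nat n)), (Z.leb_spec (m - 1) (Z.of_nat n));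
    simpl; try lia; try ring.
  - replace (Z.to_nat m) with (S (Z.to_nat (m - 1))) by lia.
    rewrite <- pascal by lia. ring.
  - replace (Z.to_nat m) with (S n) by lia. replace (Z.to_nat (m - 1)) with n by lia.
    rewrite !C_n_n. ring.
  - replace (Z.to_nat m) with 0%nat by lia. rewrite !C_n_0. ring.
Qed.

Lemma binomZ_diff_SS n m :
  binomZ (S (S n)) m - binomZ (S (S n)) (m - 1) =
  (binomZ n m - binomZ n (m - 1)) + 2 * (binomZ n (m - 1) - binomZ n (m - 2))
  + (binomZ n (m - 2) - binomZ n (m - 3)).
Proof.
  rewrite !binomZ_S.
  replace (m - 1 - 1)%Z with (m - 2)%Z by lia. replace (m - 2 - 1)%Z with (m - 3)%Z by lia.
  ring.
Qed.

(* By the reflection principle, [ballot i j] counts the paths of [i] steps from 0 to [j]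
   that stay nonnegative, with steps +1, -1 and two kinds of level steps; [ballot i 0]
   is the Catalan number of index [i + 1]. *)
Definition ballot (i : nat) (j : Z) : R :=
  binomZ (2 * i + 1) (Z.of_nat i - j) - binomZ (2 * i + 1) (Z.of_nat i - j - 1).

Lemma ballot_S i j : ballot (S i) j = ballot i (j + 1) + 2 * ballot i j + ballot i (j - 1).
Proof.
  unfold ballot. replace (2 * S i + 1)%nat with (S (S (2 * i + 1))) by lia.
  rewrite binomZ_diff_SS. set (m := (Z.of_nat (S i) - j)%Z).
  replace (Z.of_nat i - (j + 1))%Z with (m - 2)%Z by (unfold m; lia).
  replace (Z.of_nat i - j)%Z with (m - 1)%Z by (unfold m; lia).
  replace (Z.of_nat i - (j - 1))%Z with m by (unfold m; lia).
  replace (m - 2 - 1)%Z with (m - 3)%Z by lia. replace (m - 1 - 1)%Z with (m - 2)%Z by lia.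
  replace (Z.of_nat (S i) - j - 1)%Z with (m - 1)%Z by (unfold m; lia).
  ring.
Qed.

Lemma ballot_neg1 i : ballot i (-1) = 0.
Proof.
  unfold ballot, binomZ.
  destruct (Z.leb_spec 0 (Z.of_nat i - -1)), (Z.leb_spec (Z.of_nat i - -1) (Z.of_nat (2 * i + 1))),
    (Z.leb_spec 0 (Z.of_nat i - -1 - 1)), (Z.leb_spec (Z.of_nat i - -1 - 1) (Z.of_nat (2 * i + 1)));
    try lia; cbn [andb].
  replace (Z.to_nat (Z.of_nat i - -1)) with (S i) by lia.
  replace (Z.to_nat (Z.of_nat i - -1 - 1)) with i by lia.
  rewrite (pascal_step1 _ (S i)) by lia. replace (2 * i + 1 - S i)%nat with i by lia. ring.
Qed.

Lemma ballot_0_nat j : ballot 0 (Z.of_nat j) = if Nat.eqb j 0 then 1 else 0.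
Proof.
  unfold ballot, binomZ. destruct j as [|j]; simpl.
  - rewrite C_n_0. ring.
  - ring.
Qed.

Lemma ballot_i0 i : ballot i 0 = 2 * INR (fact (2 * i + 1)) / (INR (fact i) * INR (fact (i + 2))).
Proof.
  unfold ballot, binomZ. rewrite Z.sub_0_r.
  destruct (Z.leb_spec 0 (Z.of_nat i)), (Z.leb_spec (Z.of_nat i) (Z.of_nat (2 * i + 1))); try lia.
  rewrite Nat2Z.id. unfold Binomial.C.
  replace (2 * i + 1 - i)%nat with (S i) by lia.
  destruct i as [|i].
  - simpl. field.
  - destruct (Z.leb_spec 0 (Z.of_nat (S i) - 1)),
      (Z.leb_spec (Z.of_nat (S i) - 1) (Z.of_nat (2 * S i + 1)));
      try lia. simpl andb. cbv iota.
    replace (Z.to_nat (Z.of_nat (S i) - 1)) with i by lia.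
    replace (2 * S i + 1 - i)%nat with (S (S (S i))) by lia.
    replace (S i + 2)%nat with (S (S (S i))) by lia.
    rewrite !(fact_simpl (S (S i))), !(fact_simpl (S i)), !mult_INR, !S_INR.
    assert (F := INR_fact_pos i). assert (0 <= INR i) by apply pos_INR.
    rewrite (fact_simpl i), mult_INR, S_INR. field. lra.
Qed.

Lemma pochhammer_pos a n : 0 < a -> 0 < pochhammer a n.
Proof.
  intro Ha. induction n as [|n IH]; simpl; [lra|].
  apply Rmult_lt_0_compat; [exact IH|]. assert (0 <= INR n) by apply pos_INR. lra.
Qed.

Lemma ballot_i0_pochhammer i : ballot i 0 = pochhammer (3/2) i / pochhammer 3 i * 4 ^ i.
Proof.
  rewrite ballot_i0. induction i as [|i IH].
  - simpl. field.
  - cbn [pochhammer pow].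
    assert (P1 := pochhammer_pos (3/2) i ltac:(lra)). assert (P2 := pochhammer_pos 3 i ltac:(lra)).
    assert (0 <= INR i) by apply pos_INR.
    replace (pochhammer (3 / 2) i * (3 / 2 + INR i) / (pochhammer 3 i * (3 + INR i)) * (4 * 4 ^ i))
      with ((pochhammer (3 / 2) i / pochhammer 3 i * 4 ^ i) * (4 * (3/2 + INR i) / (3 + INR i)))
      by (field; lra).
    rewrite <- IH.
    replace (2 * S i + 1)%nat with (S (S (2 * i + 1))) by lia.
    replace (S i + 2)%nat with (S (i + 2)) by lia.
    rewrite !(fact_simpl (S (2 * i + 1))), !fact_simpl, !mult_INR.
    assert (A1 := INR_fact_pos i). assert (A2 := INR_fact_pos (i + 2)).
    assert (A3 := INR_fact_pos (2 * i + 1)).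
    rewrite !S_INR, !plus_INR, !mult_INR. simpl (INR 2). simpl (INR 1).
    field. lra.
Qed.

(* [binomial_transform al f k] is [sum_(i <= k) C(k, i) al^(k - i) f i], computed as
   [(al + shift)^k f] evaluated at 0. *)
Fixpoint binomial_transform (al : R) (f : nat -> R) (k : nat) : R :=
  match k with
  | O => f O
  | S k' => al * binomial_transform al f k' + binomial_transform al (fun i => f (S i)) k'
  end.

Lemma binomial_transform_ext al k : forall f g, (forall i, f i = g i) ->
  binomial_transform al f k = binomial_transform al g k.
Proof.
  induction k as [|k IH]; intros f g E; simpl; [apply E|].
  rewrite (IH f g E), (IH (fun i => f (S i)) (fun i => g (S i))); auto.
Qed.

Lemma binomial_transform_lin al k : forall (l m : R) (f g : nat -> R),
  binomial_transform al (fun i => l * f i + m * g i) k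
  = l * binomial_transform al f k + m * binomial_transform al g k.
Proof.
  induction k as [|k IH]; intros l m f g; simpl; [reflexivity|].
  rewrite IH, (IH l m (fun i => f (S i)) (fun i => g (S i))). ring.
Qed.

Definition exp_convolution (al : R) (f : nat -> R) (n : nat) : R :=
  sum_f_R0 (fun i => f i / INR (fact i) * (al ^ (n - i) / INR (fact (n - i)))) n.

Lemma exp_convolution_S al f n :
  INR (S n) * exp_convolution al f (S n)
  = al * exp_convolution al f n + exp_convolution al (fun i => f (S i)) n.
Proof.
  unfold exp_convolution.
  set (T := fun i => f i / INR (fact i) * (al ^ (S n - i) / INR (fact (S n - i)))).
  rewrite scal_sum.
  rewrite (sum_eq _ (fun i => INR (S n - i) * T i + INR i * T i)).
  2:{ intros i Hi. rewrite <- Rmult_plus_distr_r, <- plus_INR.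
      replace (S n - i + i)%nat with (S n) by lia. unfold T. ring. }
  rewrite plus_sum, tech5. replace (S n - S n)%nat with 0%nat by lia.
  rewrite (decomp_sum (fun i => INR i * T i) (S n)) by lia. simpl pred.
  rewrite !Rmult_0_l, !Rplus_0_r, Rplus_0_l, scal_sum. f_equal.
  - apply sum_eq. intros i Hi. unfold T.
    replace (S n - i)%nat with (S (n - i)) by lia.
    rewrite fact_simpl, mult_INR. cbn [pow].
    assert (A1 := INR_fact_pos i). assert (A2 := INR_fact_pos (n - i)).
    assert (0 < INR (S (n - i))) by (apply lt_0_INR; lia).
    field. lra.
  - apply sum_eq. intros i Hi. unfold T.
    replace (S n - S i)%nat with (n - i)%nat by lia.
    rewrite fact_simpl, mult_INR.
    assert (A1 := INR_fact_pos i). assert (A2 := INR_fact_pos (n - i)).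
    assert (0 < INR (S i)) by (apply lt_0_INR; lia).
    field. lra.
Qed.

Lemma binomial_transform_exp_convolution al n : forall f,
  binomial_transform al f n = INR (fact n) * exp_convolution al f n.
Proof.
  induction n as [|n IH]; intro f.
  - unfold exp_convolution. simpl. field.
  - cbn [binomial_transform]. rewrite IH, (IH (fun i => f (S i))), fact_simpl, mult_INR.
    replace (INR (S n) * INR (fact n) * exp_convolution al f (S n))
      with (INR (fact n) * (INR (S n) * exp_convolution al f (S n))) by ring.
    rewrite exp_convolution_S. ring.
Qed.

Section PeriodicWeights.

Variables (w : nat -> R) (q c al : R).
Hypothesis w_odd : forall j, w (2 * j + 1)%nat = 1.
Hypothesis w_even : forall j, w (2 * j + 2)%nat = q.
Hypothesis c_sq : c * c = q.
Hypothesis al_def : al = 1 + q - 2 * c.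

(* Two steps of a path from an odd height make a Motzkin step with weights 1 (up),
   1 + q (level) and q (down). As 1 + q = al + 2c and q = c^2, the path counts from odd
   heights are binomial transforms in [al] of [c]-weighted [ballot] numbers. *)
Let odd_dyck k j := dyck w (2 * k + 1) (2 * j + 1).
Let odd_transform k j := binomial_transform al (fun i => c ^ (i + j) * ballot i (Z.of_nat j)) k.

Lemma odd_dyck_0 j : odd_dyck 0 j = if Nat.eqb j 0 then 1 else 0.
Proof.
  unfold odd_dyck. destruct j as [|j].
  - assert (H1 := w_odd 0). simpl in H1 |- *. rewrite H1. ring.
  - replace (2 * S j + 1)%nat with (S (S (S (2 * j)))) by lia. simpl. ring.
Qed.

Lemma odd_dyck_S_0 k : odd_dyck (S k) 0 = odd_dyck k 1 + (1 + q) * odd_dyck k 0.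
Proof.
  unfold odd_dyck. replace (2 * S k + 1)%nat with (S (S (2 * k + 1))) by lia.
  change (2 * 0 + 1)%nat with 1%nat. change (2 * 1 + 1)%nat with 3%nat.
  assert (H1 := w_odd 0). assert (H2 := w_even 0). simpl in H1, H2.
  cbn [dyck]. rewrite H1, H2. ring.
Qed.

Lemma odd_dyck_S_S k j :
  odd_dyck (S k) (S j) = odd_dyck k (S (S j)) + (1 + q) * odd_dyck k (S j) + q * odd_dyck k j.
Proof.
  unfold odd_dyck. set (m := (2 * k + 1)%nat). set (h := (2 * j)%nat).
  replace (2 * S k + 1)%nat with (S (S m)) by (unfold m; lia).
  replace (2 * S j + 1)%nat with (S (S (S h))) by (unfold h; lia).
  replace (2 * S (S j) + 1)%nat with (S (S (S (S (S h))))) by (unfold h; lia).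
  replace (2 * j + 1)%nat with (S h) by (unfold h; lia).
  assert (H1 : w (S (S (S h))) = 1) by (rewrite <- (w_odd (S j)); f_equal; unfold h; lia).
  assert (H2 : w (S (S (S (S h)))) = q) by (rewrite <- (w_even (S j)); f_equal; unfold h; lia).
  assert (H3 : w (S (S h)) = q) by (rewrite <- (w_even j); f_equal; unfold h; lia).
  replace (h + 1)%nat with (S h) by lia. cbn [dyck]. rewrite H1, H2, H3. ring.
Qed.

Lemma odd_transform_0 j : odd_transform 0 j = if Nat.eqb j 0 then 1 else 0.
Proof.
  unfold odd_transform. cbn [binomial_transform]. rewrite ballot_0_nat. destruct j; simpl; ring.
Qed.

Lemma odd_transform_S_0 k : odd_transform (S k) 0 = odd_transform k 1 + (1 + q) * odd_transform k 0.
Proof.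
  unfold odd_transform. cbn [binomial_transform].
  rewrite (binomial_transform_ext al k (fun i => c ^ (S i + 0) * ballot (S i) (Z.of_nat 0))
             (fun i => 1 * (c ^ (i + 1) * ballot i (Z.of_nat 1))
                       + (2 * c) * (c ^ (i + 0) * ballot i (Z.of_nat 0)))).
  2:{ intro i. rewrite ballot_S. change (Z.of_nat 0 - 1)%Z with (-1)%Z.
      rewrite ballot_neg1. change (Z.of_nat 0 + 1)%Z with (Z.of_nat 1).
      replace (S i + 0)%nat with (S (i + 0)) by lia. replace (i + 1)%nat with (S (i + 0)) by lia.
      cbn [pow]. ring. }
  rewrite binomial_transform_lin, al_def.
  ring.
Qed.

Lemma odd_transform_S_S k j :
  odd_transform (S k) (S j)
  = odd_transform k (S (S j)) + (1 + q) * odd_transform k (S j) + q * odd_transform k j.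
Proof.
  unfold odd_transform. cbn [binomial_transform].
  rewrite (binomial_transform_ext al k
             (fun i => c ^ (S i + S j) * ballot (S i) (Z.of_nat (S j)))
             (fun i => 1 * (c ^ (i + S (S j)) * ballot i (Z.of_nat (S (S j))))
                       + 1 * ((2 * c) * (c ^ (i + S j) * ballot i (Z.of_nat (S j)))
                              + q * (c ^ (i + j) * ballot i (Z.of_nat j))))).
  2:{ intro i. rewrite ballot_S.
      replace (Z.of_nat (S j) + 1)%Z with (Z.of_nat (S (S j))) by lia.
      replace (Z.of_nat (S j) - 1)%Z with (Z.of_nat j) by lia.
      replace (S i + S j)%nat with (S (S (i + j))) by lia.
      replace (i + S (S j))%nat with (S (S (i + j))) by lia.
      replace (i + S j)%nat with (S (i + j)) by lia.
      cbn [pow]. rewrite <- c_sq. ring. }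
  rewrite !binomial_transform_lin, al_def. ring.
Qed.

Lemma odd_dyck_transform k j : odd_dyck k j = odd_transform k j.
Proof.
  revert j; induction k as [|k IH]; intro j.
  - rewrite odd_dyck_0, odd_transform_0. reflexivity.
  - destruct j as [|j].
    + rewrite odd_dyck_S_0, odd_transform_S_0, !IH. reflexivity.
    + rewrite odd_dyck_S_S, odd_transform_S_S, !IH. reflexivity.
Qed.

Lemma dyck_periodic_moment k :
  dyck w (2 * S k) 0 = binomial_transform al (fun i => c ^ i * ballot i 0) k.
Proof.
  replace (2 * S k)%nat with (S (2 * k + 1)) by lia.
  change (dyck w (S (2 * k + 1)) 0) with (odd_dyck k 0). rewrite odd_dyck_transform.
  apply binomial_transform_ext. intro i. rewrite Nat.add_0_r. reflexivity.
Qed.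

End PeriodicWeights.

Lemma pochhammer_ratio_bounds a b n : 0 < a <= b ->
  0 <= pochhammer a n / pochhammer b n <= 1.
Proof.
  intro Hab.
  assert (Pa := pochhammer_pos a n ltac:(lra)). assert (Pb := pochhammer_pos b n ltac:(lra)).
  split; [left; apply Rdiv_lt_0_compat; assumption|].
  induction n as [|n IH]; cbn [pochhammer]; [lra|].
  assert (Pa' := pochhammer_pos a n ltac:(lra)). assert (Pb' := pochhammer_pos b n ltac:(lra)).
  assert (0 <= INR n) by apply pos_INR.
  replace (pochhammer a n * (a + INR n) / (pochhammer b n * (b + INR n)))
    with ((pochhammer a n / pochhammer b n) * ((a + INR n) / (b + INR n))) by (field; lra).
  assert (IH' := IH Pa' Pb').
  assert (0 <= pochhammer a n / pochhammer b n) by (left; apply Rdiv_lt_0_compat; auto).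
  assert (0 <= (a + INR n) / (b + INR n) <= 1).
  { split; [apply Rdiv_le_0_compat; lra|].
    apply Rmult_le_reg_r with (b + INR n); [lra|].
    unfold Rdiv. rewrite Rmult_assoc, Rinv_l by lra. lra. }
  nra.
Qed.

Lemma Rabs_pow_div_fact y n : Rabs (y ^ n / INR (fact n)) = Rabs y ^ n / INR (fact n).
Proof.
  rewrite Rabs_div, RPow_abs, (Rabs_pos_eq (INR _))
    by (apply pos_INR || apply not_0_INR, fact_neq_0).
  reflexivity.
Qed.

Lemma hyp1F1_mul_exp a b z al x : 0 < a <= b ->
  hyp1F1 a b (z * x) * exp (al * x)
  = PSeries (fun n => binomial_transform al (fun i => pochhammer a i / pochhammer b i * z ^ i) n
                      / INR (fact n)) x.
Proof.
  intro Hab.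
  set (A := fun n => pochhammer a n / pochhammer b n * (z * x) ^ n / INR (fact n)).
  set (B := fun n => (al * x) ^ n / INR (fact n)).
  assert (HAabs : ex_series (fun n => Rabs (A n))).
  { refine (ex_series_le (V := R_CompleteNormedModule) _ _ _ (ex_series_scal_exp 1 (Rabs (z * x)))).
    intro n. change (norm (Rabs (A n))) with (Rabs (Rabs (A n))). rewrite Rabs_Rabsolu.
    replace (A n) with (pochhammer a n / pochhammer b n * ((z * x) ^ n / INR (fact n)))
      by (unfold A, Rdiv; ring).
    rewrite Rabs_mult, Rabs_pow_div_fact, Rmult_1_l.
    destruct (pochhammer_ratio_bounds a b n Hab) as [P0 P1]. rewrite Rabs_pos_eq by exact P0.
    assert (0 <= Rabs (z * x) ^ n / INR (fact n))
      by (apply Rdiv_le_0_compat; [apply pow_le, Rabs_pos|apply INR_fact_pos]).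
    nra. }
  assert (HBabs : ex_series (fun n => Rabs (B n))).
  { exists (exp (Rabs (al * x))). eapply is_series_ext; [|apply is_series_exp].
    intro n. unfold B. rewrite Rabs_pow_div_fact. reflexivity. }
  assert (HA : is_series A (hyp1F1 a b (z * x))).
  { apply Series_correct, ex_series_Rabs, HAabs. }
  symmetry. apply is_series_unique.
  eapply is_series_ext; [|exact (is_series_mult A B _ _ HA (is_series_exp (al * x)) HAabs HBabs)].
  intro n. cbv beta. rewrite binomial_transform_exp_convolution. unfold exp_convolution.
  replace (INR (fact n) * _ / INR (fact n) * x ^ n) with (x ^ n * sum_f_R0 (fun i =>
    pochhammer a i / pochhammer b i * z ^ i / INR (fact i) * (al ^ (n - i) / INR (fact (n - i)))) n)
    by (assert (F := INR_fact_pos n); field; lra).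
  rewrite scal_sum. apply sum_eq. intros i Hi. unfold A, B.
  rewrite !Rpow_mult_distr.
  replace (x ^ n) with (x ^ i * x ^ (n - i)) by (rewrite <- pow_add; f_equal; lia).
  assert (F1 := INR_fact_pos i). assert (F2 := INR_fact_pos (n - i)).
  assert (Pb := pochhammer_pos b i ltac:(lra)). field. lra.
Qed.

Lemma linear_ode_eq0 (v b : R -> R) (t K : R) :
  v 0 = 0 -> filterlim v (at_right 0) (locally 0) ->
  (forall s, 0 < s <= t -> is_derive v s (v s * b s)) ->
  (forall s, 0 <= s <= t -> Rabs (v s) <= K /\ Rabs (b s) <= K) ->
  0 <= t -> v t = 0.
Proof.
  intros Hv0 Hv Dv HK Ht.
  assert (K0 : 0 <= K) by (apply Rle_trans with (2 := proj1 (HK 0 ltac:(lra))), Rabs_pos).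
  refine (graded_system_eq0 (fun _ => v) (fun _ s => v s * b s) t K 1 K _ _ _ _ _ _ _ _ O t _);
    [lra|lra|lra|intro; exact Hv0|intro; exact Hv|intros _ s Hs; apply Dv, Hs| | |lra].
  - intros k s Hs. rewrite pow1, Rmult_1_r. apply HK, Hs.
  - intros s E Hs HE Hj k. specialize (Hj O). rewrite pow_O, Rmult_1_r in Hj.
    rewrite pow1, Rmult_1_r, Rabs_mult, Rmult_comm.
    apply Rmult_le_compat; auto using Rabs_pos. apply HK. lra.
Qed.

Lemma f1_eq_egf_shift (q r : R) (a : nat -> R) :
  (forall m, Rabs (a m) <= r ^ m) -> a O = 1 ->
  (forall n, a (S n) = binomial_transform ((sqrt q - 1) ^ 2)
                         (fun i => pochhammer (3/2) i / pochhammer 3 i * (4 * sqrt q) ^ i) n) ->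
  forall x, f1 q x = egf_shift a 0 x.
Proof.
  intros Hr Ha0 HaS x.
  assert (Hd : forall y, Derive (egf_shift a 0) y = egf_shift a 1 y)
    by (intro y; apply is_derive_unique, (is_derive_egf_shift a r Hr)).
  unfold f1. cbv zeta.
  rewrite (RInt_ext _ (Derive (egf_shift a 0))).
  - rewrite RInt_Derive.
    + rewrite egf_shift_0, Ha0. ring.
    + intros y _. eexists. apply (is_derive_egf_shift a r Hr).
    + intros y _. apply (continuous_ext (egf_shift a 1)); [intro; symmetry; apply Hd|].
      apply (continuous_egf_shift a r Hr).
  - intros y _. rewrite Hd, hyp1F1_mul_exp by lra.
    apply PSeries_ext. intro n. rewrite Nat.add_1_r, HaS. reflexivity.
Qed.

Lemma periodic_moment_pochhammer (w : nat -> R) (q : R) : 0 <= q ->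
  (forall j, w (2 * j + 1)%nat = 1) -> (forall j, w (2 * j + 2)%nat = q) ->
  forall n, dyck w (2 * S n) 0 = binomial_transform ((sqrt q - 1) ^ 2)
              (fun i => pochhammer (3/2) i / pochhammer 3 i * (4 * sqrt q) ^ i) n.
Proof.
  intros Hq Hodd Heven n. assert (Hc : sqrt q * sqrt q = q) by (apply sqrt_sqrt, Hq).
  rewrite (dyck_periodic_moment w q (sqrt q) ((sqrt q - 1) ^ 2) Hodd Heven Hc) by nra.
  apply binomial_transform_ext. intro i. rewrite ballot_i0_pochhammer, Rpow_mult_distr. ring.
Qed.

Lemma volterra_u0_vanish (u : Z -> R -> R) :
  (forall (j : Z) (t : R), 0 < t -> is_derive (u j) t (u j t * (u (j + 1)%Z t - u (j - 1)%Z t))) ->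
  filterlim (u 0%Z) (at_right 0) (locally 0) -> u 0%Z 0 = 0 ->
  (forall T : R, 0 < T -> exists M : R, forall (j : Z) (t : R), 0 <= t <= T -> Rabs (u j t) <= M) ->
  forall t, 0 < t -> u 0%Z t = 0.
Proof.
  intros Hode Hcont Hu0 Hbnd t Ht. destruct (Hbnd t Ht) as [M HM].
  apply (linear_ode_eq0 (u 0%Z) (fun s => u 1%Z s - u (-1)%Z s) t (2 * M));
    [exact Hu0|exact Hcont| | |lra].
  - intros s Hs. apply (Hode 0%Z), Hs.
  - intros s Hs.
    assert (H0 := HM 0%Z s Hs). assert (H1 := HM 1%Z s Hs). assert (H2 := HM (-1)%Z s Hs).
    assert (0 <= Rabs (u 0%Z s)) by apply Rabs_pos. split; [lra|].
    apply Rle_trans with (1 := Rabs_triang _ _). rewrite Rabs_Ropp. lra.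
Qed.

Lemma volterra_restrict_nat (u : Z -> R -> R) :
  (forall (j : Z) (t : R), 0 < t -> is_derive (u j) t (u j t * (u (j + 1)%Z t - u (j - 1)%Z t))) ->
  forall (h : nat) (t : R), 0 < t ->
  is_derive (u (Z.of_nat (S h))) t
    (u (Z.of_nat (S h)) t * (u (Z.of_nat (S (S h))) t - u (Z.of_nat h) t)).
Proof.
  intros Hode h t Ht. assert (H := Hode (Z.of_nat (S h)) t Ht).
  replace (Z.of_nat (S h) + 1)%Z with (Z.of_nat (S (S h))) in H by lia.
  replace (Z.of_nat (S h) - 1)%Z with (Z.of_nat h) in H by lia. exact H.
Qed.

Theorem proposition11 (q : R) (hq : 0 < q) (u : Z -> R -> R)
  (* Volterra lattice u_j' = u_j (u_{j+1} - u_{j-1}) for t > 0, all j in Z *)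
  (Hode : forall (j : Z) (t : R), 0 < t ->
     is_derive (u j) t (u j t * (u (j + 1)%Z t - u (j - 1)%Z t)))
  (* each u_j is right-continuous at t = 0 *)
  (Hcont : forall j : Z, filterlim (u j) (at_right 0) (locally (u j 0)))
  (* the solution is bounded (uniformly in j) on compact time intervals *)
  (Hbnd : forall T : R, 0 < T -> exists M : R,
     forall (j : Z) (t : R), 0 <= t <= T -> Rabs (u j t) <= M)
  (* initial data *)
  (Hneg : forall j : Z, (j <= 0)%Z -> u j 0 = 0)
  (Hodd : forall j : Z, (0 < j)%Z -> Z.odd j = true -> u j 0 = 1)
  (Hevn : forall j : Z, (0 < j)%Z -> Z.even j = true -> u j 0 = q) :
  forall t : R, 0 <= t -> u 1%Z t = Derive (f1 q) t / f1 q t.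
Proof.
  intros t Ht.
  set (w := fun (h : nat) (s : R) => u (Z.of_nat h) s).
  assert (w_odd : forall j, w (2 * j + 1)%nat 0 = 1).
  { intro j. apply Hodd; [lia|]. replace (Z.of_nat (2 * j + 1)) with (2 * Z.of_nat j + 1)%Z by lia.
    apply Z.odd_odd. }
  assert (w_even : forall j, w (2 * j + 2)%nat 0 = q).
  { intro j. apply Hevn; [lia|].
    replace (Z.of_nat (2 * j + 2)) with (2 * (Z.of_nat j + 1))%Z by lia.
    apply Z.even_even. }
  assert (w_init_ge0 : forall h, 0 <= w h 0).
  { intro h. destruct (Nat.Even_or_Odd h) as [[[|m] ->]|[m ->]].
    - unfold w. rewrite Hneg by lia. lra.
    - replace (2 * S m)%nat with (2 * m + 2)%nat by lia. rewrite w_even. lra.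
    - rewrite w_odd. lra. }
  assert (w0_vanish : forall s, 0 < s -> w O s = 0).
  { apply (volterra_u0_vanish u Hode); [|apply Hneg; lia|exact Hbnd].
    rewrite <- (Hneg 0%Z) at 2 by lia. apply Hcont. }
  assert (w_bounded : forall T, 0 < T -> exists M, forall h s, 0 <= s <= T -> Rabs (w h s) <= M).
  { intros T HT. destruct (Hbnd T HT) as [M HM]. exists M. intros h s. apply HM. }
  destruct (initial_moment_bound w w_bounded) as [r [_ Hr]].
  assert (Hf1 : forall x, f1 q x = egf_shift (fun k => moment w k 0) 0 x).
  { apply (f1_eq_egf_shift q r _ Hr eq_refl).
    exact (periodic_moment_pochhammer (fun h => w h 0) q ltac:(lra) w_odd w_even). }
  rewrite (Derive_ext _ _ _ Hf1), Hf1.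
  exact (w1_eq_log_derive_egf w w0_vanish (volterra_restrict_nat u Hode) (fun h => Hcont _)
           w_bounded w_init_ge0 t Ht).
Qed.
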